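(* For every word $\omega\in[n]^*$, the set $B_\omega\subseteq\mathbb{Z}^n$ is connected, where a subset of $\mathbb{Z}^n$ is regarded as a graph by joining two of its elements by an edge iff their Euclidean distance is $1$.
   Context: Let $[n]=\{1,\dots,n\}$, $e_1,\dots,e_n$ the standard basis of $\mathbb{Z}^n$; $\varepsilon$ is the empty word, $*$ concatenation. For words $\omega$ over $[n]$ define recursively $\delta^i_\omega\in\mathbb{Z}^n$: $\delta^i_\varepsilon=e_i$; $\delta^j_{\omega*j}=\delta^j_\omega$, $\delta^i_{\omega*j}=\delta^i_\omega-\delta^j_\omega$ for $i\ne j$. Let $B_\varepsilon=\{0\}$ and $B_{\omega*j}=B_\omega+\{0,\delta^j_\omega\}$ (Minkowski sum). *)

From mathcomp Require Import all_boot all_order all_algebra.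
Set Implicit Arguments. Unset Strict Implicit. Unset Printing Implicit Defensive.
Import Order.TTheory GRing.Theory Num.Theory.
Local Open Scope ring_scope.

(* Points of Z^n, coordinates indexed by 'I_n = {0,...,n-1} (stands for [n]). *)
Definition vec (n : nat) := {ffun 'I_n -> int}.

Definition evec n (i : 'I_n) : vec n := [ffun k => (k == i)%:Z].

(* One step of the recursion for delta: from (delta^i_w)_i to (delta^i_{w*j})_i *)
Definition dstep n (D : 'I_n -> vec n) (j : 'I_n) : 'I_n -> vec n :=
  fun i => if i == j then D j else D i - D j.

(* delta w i = delta^i_w ; words are seq 'I_n, w*j is rcons w j *)
Definition delta n (w : seq 'I_n) : 'I_n -> vec n := foldl (@dstep n) (@evec n) w.

(* B_w as a (boolean) subset of Z^n:
   B_eps = {0},  B_{w*j} = B_w + {0, delta^j_w}. *)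
Fixpoint Bset_rev n (rw : seq 'I_n) : pred (vec n) :=
  match rw with
  | [::] => fun x => x == 0
  | j :: rw' => fun x => Bset_rev rw' x || Bset_rev rw' (x - delta (rev rw') j)
  end.
Definition Bset n (w : seq 'I_n) : pred (vec n) := Bset_rev (rev w).

Definition adj n (x y : vec n) : bool := \sum_i (x i - y i) ^+ 2 == 1.

Definition connected_set n (S : pred (vec n)) : Prop :=
  forall x y, S x -> S y ->
    exists p : seq (vec n), [/\ all S p, path (@adj n) x p & last x p = y].

From mathcomp Require Import all_boot all_order all_algebra.
Import Order.TTheory GRing.Theory Num.Theory.
Local Open Scope ring_scope.
Set Implicit Arguments. Unset Strict Implicit.

(* Since B_{w*j} = B_w U (B_w + delta^j_w), the set B_{w*j} is the union of
   two translates of the connected set B_w, and it suffices to exhibit one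
   edge of the unit-distance graph between the two pieces.  Such an edge
   comes from the invariant (delta_witness): for every letter i, the vector
   delta^i_w - e_i is a difference of two points of B_w, i.e. some x and
   x + delta^i_w - e_i both lie in B_w.  Then x + delta^j_w - e_j in B_w and
   x + delta^j_w in B_w + delta^j_w are at distance 1. *)

Lemma adj_sym n (x y : vec n) : adj x y = adj y x.
Proof.
rewrite /adj; congr (_ == _); apply: eq_bigr => i _.
by rewrite -sqrrN opprB.
Qed.

Lemma adj_translate n (x y d : vec n) : adj (x + d) (y + d) = adj x y.
Proof.
rewrite /adj; congr (_ == _); apply: eq_bigr => i _.
by rewrite !ffunE opprD addrACA subrr addr0.
Qed.

Lemma adj_sub_evec n (z : vec n) (j : 'I_n) : adj (z - evec j) z.
Proof.
rewrite /adj (bigD1 j) //= big1 ?addr0 => [|i ne_ij].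
  by rewrite !ffunE addrAC subrr add0r sqrrN eqxx.
by rewrite !ffunE (negbTE ne_ij) subr0 subrr expr0n.
Qed.

Definition reach n (S : pred (vec n)) (x y : vec n) : Prop :=
  exists p : seq (vec n), [/\ all S p, path (@adj n) x p & last x p = y].

Section Reachability.
Variables (n : nat) (S : pred (vec n)).

Lemma reach_refl x : reach S x x.
Proof. by exists [::]. Qed.

Lemma reach_edge x y : adj x y -> S y -> reach S x y.
Proof. by move=> xy Sy; exists [:: y]; rewrite /= xy Sy. Qed.

Lemma reach_trans x y z : reach S x y -> reach S y z -> reach S x z.
Proof.
move=> [p [Sp xp <-]] [q [Sq yq <-]]; exists (p ++ q).
by rewrite all_cat Sp Sq cat_path xp yq last_cat.
Qed.

(* Paths can be reversed because adjacency is symmetric; the reversed path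
   ends at x, so x itself must belong to S. *)
Lemma reach_sym x y : S x -> reach S x y -> reach S y x.
Proof.
move=> Sx [p [Sp xp <-]]; exists (rev (belast x p)); split.
- have Sxp : all S (x :: p) by rewrite /= Sx.
  by move: Sxp; rewrite lastI all_rcons all_rev => /andP[].
- by rewrite rev_path (eq_path (fun a b => adj_sym b a)).
- by case: p {Sp xp} => //= z q; rewrite rev_cons last_rcons.
Qed.

Lemma reach_mono (T : pred (vec n)) x y :
  (forall z, S z -> T z) -> reach S x y -> reach T x y.
Proof.
move=> ST [p [Sp xp xy]]; exists p; split => //.
by apply/allP => z /(allP Sp) /ST.
Qed.

Lemma reach_translate (d x y : vec n) :
  reach S x y -> reach [pred z | S (z - d)] (x + d) (y + d).
Proof.
move=> [p [Sp xp <-]]; exists (map (fun z => z + d) p); split.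
- by rewrite all_map; apply/allP => z /(allP Sp) /=; rewrite addrK.
- elim: p x Sp xp => //= z p IHp x /andP[_ Sp] /andP[xz zp].
  by rewrite adj_translate xz IHp.
- by rewrite (last_map (fun z => z + d)).
Qed.

End Reachability.

Lemma connected_translate n (S : pred (vec n)) (d : vec n) :
  connected_set S -> connected_set [pred z | S (z - d)].
Proof.
move=> cS x y Sx Sy; rewrite -(subrK d x) -(subrK d y).
exact/reach_translate/cS.
Qed.

(* Two connected sets joined by an edge have connected union: every point of
   the union reaches the endpoint x1 of the edge, and reachability is
   symmetric and transitive. *)
Lemma connected_union_edge n (S S1 S2 : pred (vec n)) (x1 x2 : vec n) :
  (forall z, S z = S1 z || S2 z) ->
  connected_set S1 -> connected_set S2 -> S1 x1 -> S2 x2 -> adj x1 x2 ->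
  connected_set S.
Proof.
move=> defS cS1 cS2 S1x1 S2x2 x1x2.
have sub1 z : S1 z -> S z by rewrite defS => ->.
have sub2 z : S2 z -> S z by rewrite defS orbC => ->.
have to_x1 z : S z -> reach S z x1.
  rewrite defS => /orP[S1z|S2z]; first exact/(reach_mono sub1)/cS1.
  apply: (reach_trans (reach_mono sub2 (cS2 _ _ S2z S2x2))).
  by apply: reach_edge; [rewrite adj_sym | exact: sub1].
move=> x y Sx Sy; apply: (reach_trans (to_x1 x Sx)).
exact: reach_sym Sy (to_x1 y Sy).
Qed.

Lemma Bset_nil n (x : vec n) : Bset [::] x = (x == 0).
Proof. by []. Qed.

Lemma BsetS n (w : seq 'I_n) (j : 'I_n) (z : vec n) :
  Bset (rcons w j) z = Bset w z || Bset w (z - delta w j).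
Proof. by rewrite /Bset rev_rcons /= revK. Qed.

Lemma deltaS n (w : seq 'I_n) (j : 'I_n) :
  delta (rcons w j) = dstep (delta w) j.
Proof. by rewrite /delta foldl_rcons. Qed.

(* For w = eps it is 0 - 0; appending j keeps delta^j and
   enlarges B, while for i <> j the new difference delta^i_w - delta^j_w - e_i
   is realized by shifting the old witness into the translate B_w + delta^j_w. *)
Lemma delta_witness n (w : seq 'I_n) (i : 'I_n) :
  exists2 x, Bset w x & Bset w (x + delta w i - evec i).
Proof.
elim/last_ind: w i => [|w j IHw] i.
  by exists 0; rewrite Bset_nil /delta /= ?add0r ?subrr.
rewrite deltaS /dstep; have [->|ne_ij] := eqVneq i j.
  have [x Bx Bxj] := IHw j.
  by exists x; rewrite BsetS ?Bx // Bxj.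
have [x Bx Bxi] := IHw i.
exists (x + delta w j); rewrite BsetS ?addrK ?Bx ?orbT //.
by rewrite (addrC (delta w i)) addrA addrK Bxi.
Qed.

Theorem lemma3p5 (n : nat) (w : seq 'I_n) : connected_set (Bset w).
Proof.
elim/last_ind: w => [|w j connB].
  by move=> x y; rewrite !Bset_nil => /eqP-> /eqP->; apply: reach_refl.
have [a Ba Baj] := delta_witness w j.
have connB_shift := connected_translate (d := delta w j) connB.
apply: (connected_union_edge (BsetS w j) connB connB_shift Baj _ (adj_sub_evec _ _)).
by rewrite /= addrK.
Qed.
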